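(* Let $G=(\Gamma,s)$ be a connected rooted graph with $\tilde V\neq\emptyset$. Every $p\in\mathrm{PF}(G)$ admits a prime decomposition, i.e. an ordered set partition $(A_1,\dots,A_k)$ of $\tilde V$ into nonempty blocks such that for every $i\in[k]$, the function $p^{A_i}:A_i\to\mathbb{Z}$ defined by $p^{A_i}(v)=p(v)-\deg^{A_1\cup\dots\cup A_{i-1}}(v)$ belongs to $\mathrm{PPF}(G^{A_i})$.
   Context: $\mathbb{N}=\{1,2,\dots\}$. A rooted graph $G=(\Gamma,s)$ is a finite undirected multigraph without loops with a distinguished vertex $s$ (the sink), possibly disconnected; $V$ is its vertex set and $\tilde V=V\setminus\{s\}$. $\mathrm{mult}(vw)$ is the number of edges between $v,w$; for $A\subseteq V$, $\deg^A(v)=\sum_{w\in A}\mathrm{mult}(vw)$. A $G$-parking function is a function $p:\tilde V\to\mathbb{N}$ such that for every nonempty $S\subseteq\tilde V$ there exists $v\in S$ with $p(v)\le\deg^{V\setminus S}(v)$; $\mathrm{PF}(G)$ is their set. For $A\subseteq\tilde V$, $G^A$ is the induced subgraph on $A\cup\{s\}$ rooted at $s$. For an ordered pair $(A,B)$ of nonempty disjoint sets with $A\cup B=\tilde V$ and $p\in\mathrm{PF}(G)$, $p^A(v)=p(v)$ for $v\in A$ and $p^B(v)=p(v)-\deg^A(v)$ for $v\in B$; $p$ is decomposable w.r.t. $(A,B)$ if $p^A\in\mathrm{PF}(G^A)$ and $p^B\in\mathrm{PF}(G^B)$. $p$ is prime if it is decomposable w.r.t. no such $(A,B)$ (in particular,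 if $|\tilde V|=1$ every parking function is prime). $\mathrm{PPF}(G)$ is the set of prime $G$-parking functions. *)

From mathcomp Require Import all_boot all_order all_algebra.
Set Implicit Arguments. Unset Strict Implicit. Unset Printing Implicit Defensive.
Import Order.TTheory GRing.Theory Num.Theory.

(* A rooted loopless multigraph is given by a finite vertex type V,
   a multiplicity function mult : V -> V -> nat (symmetric, zero on the
   diagonal; these are hypotheses of the theorem) and a sink s : V. *)

Section Defs.
Variables (V : finType) (mult : V -> V -> nat) (s : V).

Definition degA (A : {set V}) (v : V) : nat := \sum_(w in A) mult v w.

Definition Vt : {set V} := [set v | v != s].

Definition adj : rel V := fun v w => 0 < mult v w.
Definition connectedG : Prop := forall v w : V, connect adj v w.

(* Parking functions of the induced rooted subgraph G^W on W ∪ {s}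
   (W ⊆ \tilde V); a function W -> N is represented by q : V -> int whose
   values outside W are irrelevant.  For W = Vt this is PF(G). *)
Definition is_PF (W : {set V}) (q : V -> int) : Prop :=
  (forall v, v \in W -> (1 <= q v)%R) /\
  (forall S : {set V}, S \subset W -> S != set0 ->
     exists2 v, v \in S & (q v <= (degA ((s |: W) :\: S) v)%:Z)%R).

Definition decomposable (W A B : {set V}) (q : V -> int) : Prop :=
  is_PF A q /\ is_PF B (fun v => q v - (degA A v)%:Z)%R.

Definition is_PPF (W : {set V}) (q : V -> int) : Prop :=
  is_PF W q /\
  forall A B : {set V}, A != set0 -> B != set0 -> [disjoint A & B] ->
     A :|: B = W -> ~ decomposable W A B q.

Definition ordered_partition (W : {set V}) (As : seq {set V}) : Prop :=
  (forall i, i < size As -> nth set0 As i != set0) /\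
  (forall i j, i < size As -> j < size As -> i != j ->
     [disjoint nth set0 As i & nth set0 As j]) /\
  \bigcup_(i < size As) nth set0 As i = W.

Definition prime_decomposition (p : V -> int) (As : seq {set V}) : Prop :=
  ordered_partition Vt As /\
  forall i, i < size As ->
    is_PPF (nth set0 As i)
      (fun v => p v - (degA (\bigcup_(j < i) nth set0 As j) v)%:Z)%R.

End Defs.

From mathcomp Require Import all_boot all_order all_algebra.
From mathcomp Require Import zify.
From Stdlib Require Import Classical FunctionalExtensionality.
Import GRing.Theory Num.Theory.

(* Induction on the number of non-sink vertices: a prime parking function is
   its own decomposition; otherwise p decomposes w.r.t. some (A, B), and prime
   decompositions of p^A on G^A and of p^B on G^B concatenate to one of p,
   because deg^{A ∪ B_1 ∪ ... ∪ B_(i-1)} = deg^A + deg^{B_1 ∪ ... ∪ B_(i-1)}. *)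

Section PrimeDecomposition.
Variables (V : finType) (mult : V -> V -> nat) (s : V).

Definition prefix_union (As : seq {set V}) (i : nat) : {set V} :=
  \bigcup_(j < i) nth set0 As j.

Definition is_prime_decomposition (W : {set V}) (q : V -> int)
    (As : seq {set V}) : Prop :=
  ordered_partition W As /\
  forall i, i < size As ->
    is_PPF mult s (nth set0 As i)
      (fun v => q v - (degA mult (prefix_union As i) v)%:Z)%R.

Lemma degA_set0 v : degA mult set0 v = 0.
Proof. by rewrite /degA big_set0. Qed.

Lemma degA_setU (A B : {set V}) v : [disjoint A & B] ->
  degA mult (A :|: B) v = degA mult A v + degA mult B v.
Proof.
by move=> dAB; rewrite /degA (eq_bigl [predU A & B]) ?bigU // => x; rewrite !inE.
Qed.

Lemma prefix_union_catl (As Bs : seq {set V}) i : i <= size As ->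
  prefix_union (As ++ Bs) i = prefix_union As i.
Proof.
by move=> le_i; apply: eq_bigr => j _; rewrite nth_cat (leq_trans (ltn_ord j)).
Qed.

Lemma prefix_union_catr (As Bs : seq {set V}) k :
  prefix_union (As ++ Bs) (size As + k) =
  prefix_union As (size As) :|: prefix_union Bs k.
Proof.
rewrite /prefix_union big_split_ord /=; congr (_ :|: _); apply: eq_bigr => j _.
  by rewrite nth_cat ltn_ord.
by rewrite nth_cat ltnNge leq_addr /= addKn.
Qed.

Lemma prefix_union_sub (As : seq {set V}) i :
  prefix_union As i \subset prefix_union As (size As).
Proof.
apply/bigcupsP => j _; have [lt_j|ge_j] := ltnP j (size As).
  exact: (bigcup_sup (Ordinal lt_j)).
by rewrite nth_default ?sub0set.
Qed.

Lemma nth_sub_prefix_union (As : seq {set V}) i : i < size As ->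
  nth set0 As i \subset prefix_union As (size As).
Proof. by move=> lt_i; apply: (bigcup_sup (Ordinal lt_i)). Qed.

Lemma ordered_partition_nil : ordered_partition (set0 : {set V}) [::].
Proof. by split=> //; split=> //; rewrite big_ord0. Qed.

Lemma ordered_partition1 (W : {set V}) : W != set0 -> ordered_partition W [:: W].
Proof.
by move=> nzW; split; [case | split; [case=> [|[]] [|[]] | rewrite big_ord1]].
Qed.

Lemma ordered_partition_cat (A B : {set V}) (As Bs : seq {set V}) :
  [disjoint A & B] -> ordered_partition A As -> ordered_partition B Bs ->
  ordered_partition (A :|: B) (As ++ Bs).
Proof.
move=> dAB [AsN [AsD AsU]] [BsN [BsD BsU]].
have sA i : i < size As -> nth set0 As i \subset A.
  by rewrite -AsU; apply: nth_sub_prefix_union.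
have sB i : i < size Bs -> nth set0 Bs i \subset B.
  by rewrite -BsU; apply: nth_sub_prefix_union.
split; [|split].
- move=> i; rewrite size_cat nth_cat.
  case: (ltnP i (size As)) => [lt_i _ | ge_i lt_i]; first exact: AsN.
  by apply: BsN; lia.
- move=> i j; rewrite size_cat !nth_cat.
  case: (ltnP i (size As)) => hi; case: (ltnP j (size As)) => hj hi' hj' nij.
  + exact: AsD.
  + by rewrite (disjointWl (sA _ hi)) // (disjointWr (sB (j - size As) _)) //; lia.
  + rewrite disjoint_sym (disjointWl (sA _ hj)) //.
    by rewrite (disjointWr (sB (i - size As) _)) //; lia.
  + by apply: BsD; lia.
have := prefix_union_catr As Bs (size Bs); rewrite -size_cat /prefix_union => ->.
by rewrite AsU BsU.
Qed.

Lemma prime_decomposition_cat (A B : {set V}) (q : V -> int) As Bs :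
  [disjoint A & B] -> is_prime_decomposition A q As ->
  is_prime_decomposition B (fun v => q v - (degA mult A v)%:Z)%R Bs ->
  is_prime_decomposition (A :|: B) q (As ++ Bs).
Proof.
move=> dAB [partAs primeAs] [partBs primeBs].
split; first exact: ordered_partition_cat.
have AsU : prefix_union As (size As) = A by case: partAs => _ [].
have BsU : prefix_union Bs (size Bs) = B by case: partBs => _ [].
move=> i; rewrite size_cat nth_cat.
case: (ltnP i (size As)) => [lt_i _ | ge_i lt_i].
  by rewrite prefix_union_catl ?(ltnW lt_i) //; apply: primeAs.
have lt_k : i - size As < size Bs by lia.
rewrite -[i in prefix_union _ i](subnKC ge_i) prefix_union_catr AsU.
suff -> : (fun v => q v - (degA mult (A :|: prefix_union Bs (i - size As)) v)%:Z)%R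
   = (fun v => q v - (degA mult A v)%:Z
                   - (degA mult (prefix_union Bs (i - size As)) v)%:Z)%R.
  exact: primeBs.
apply: functional_extensionality => v.
rewrite degA_setU ?PoszD ?opprD ?addrA //.
by rewrite (disjointWr _ dAB) // -BsU prefix_union_sub.
Qed.

Lemma not_PPF_decomposable (W : {set V}) (q : V -> int) :
  is_PF mult s W q -> ~ is_PPF mult s W q ->
  exists A B : {set V}, [/\ A != set0, B != set0, [disjoint A & B],
    A :|: B = W & decomposable mult s W A B q].
Proof.
move=> PFq notPPF; apply: NNPP => noAB; apply: notPPF; split=> // A B *.
by move=> dec; apply: noAB; exists A, B.
Qed.

Lemma exists_prime_decomposition (W : {set V}) (q : V -> int) :
  is_PF mult s W q -> exists As, is_prime_decomposition W q As.
Proof.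
have [n] := ubnP #|W|; elim: n W q => // n IH W q ltWn PFq.
have [-> | nzW] := eqVneq W set0.
  by exists [::]; split; [exact: ordered_partition_nil | case].
have [PPFq | notPPF] := classic (is_PPF mult s W q).
  exists [:: W]; split; first exact: ordered_partition1.
  case=> // _ /=; congr (is_PPF _ _ _ _): PPFq.
  apply: functional_extensionality => v.
  by rewrite /prefix_union big_ord0 degA_set0 subr0.
have [A [B [nzA nzB dAB defW [PFA PFB]]]] := not_PPF_decomposable _ _ PFq notPPF.
subst W.
have cardAB : #|A :|: B| = #|A| + #|B|.
  by rewrite cardsU (disjoint_setI0 dAB) cards0 subn0.
have [As decA] : exists As, is_prime_decomposition A q As.
  by apply: IH PFA; move: ltWn nzB; rewrite cardAB -card_gt0; lia.
have [Bs decB] : exists Bs,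
    is_prime_decomposition B (fun v => q v - (degA mult A v)%:Z)%R Bs.
  by apply: IH PFB; move: ltWn nzA; rewrite cardAB -card_gt0; lia.
by exists (As ++ Bs); apply: prime_decomposition_cat.
Qed.

End PrimeDecomposition.

Theorem proposition2p5 (V : finType) (mult : V -> V -> nat) (s : V)
  (mult_sym : forall v w, mult v w = mult w v)
  (mult_loopless : forall v, mult v v = 0)
  (Hconn : connectedG mult)
  (Hnonempty : exists v : V, v != s)
  (p : V -> int) (Hp : is_PF mult s (Vt s) p) :
  exists As : seq {set V}, prime_decomposition mult s p As.
Proof. exact: exists_prime_decomposition Hp. Qed.
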